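(* Let $c:\mathbb{Q}\times\mathbb{Q}\to\mathbb{Q}$ (the controller) be any function such that for all $x,y\in\mathbb{Q}$ with $|x|\le 3.25$ and $|y|\le 3.25$ we have $|c(x,y)+2x-y|<1.25$. Consider the discrete-time system whose states are quadruples $(w,p,v,s)\in\mathbb{Q}^4$ (wind speed, position on the $y$-axis, velocity in the $y$-direction, most recent sensor reading), starting from the initial state $(w_0,p_0,v_0,s_0)=(0,0,0,0)$. An observation is a pair $(\delta,\varepsilon)\in\mathbb{Q}^2$ (wind shift, sensor error), and an observation $(\delta,\varepsilon)$ transforms a state $(w,p,v,s)$ into $(w',p',v',s')$ where $w'=w+\delta$, $p'=p+v+w'$, $s'=p'+\varepsilon$, $v'=v+c(s',s)$. Then for every finite sequence of observations $(\delta_1,\varepsilon_1),\dots,(\delta_k,\varepsilon_k)$ ($k\ge 0$) satisfying $|\delta_i|\le 1$ and $|\varepsilon_i|\le 0.25$ for all $i$, the state reached after applying these observations in turn has position $p$ with $|p|\le 3$; i.e. the car never leaves the road.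
   Context: The model describes a car travelling along a straight road of width 6 parallel to the $x$-axis (so being on the road means the $y$-position satisfies $|p|\le 3$), subject to a cross-wind perpendicular to the road, with a noisy position sensor; at each step the controller receives the current and previous sensor readings and outputs a change in the car's $y$-velocity. Informally: if the wind speed never shifts by more than 1 per unit time and the sensor is never off by more than 0.25, then the car never leaves the road. *)

From mathcomp Require Import all_boot all_order all_algebra.
Set Implicit Arguments. Unset Strict Implicit. Unset Printing Implicit Defensive.
Import Order.TTheory GRing.Theory Num.Theory.
Local Open Scope ring_scope.

Record state := State { st_w : rat; st_p : rat; st_v : rat; st_s : rat }.

Definition init_state : state := State 0 0 0 0.

Definition step (c : rat -> rat -> rat) (st : state) (o : rat * rat) : state :=
  let w' := st_w st + o.1 in
  let p' := st_p st + st_v st + w' in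
  let s' := p' + o.2 in
  let v' := st_v st + c s' (st_s st) in
  State w' p' v' s'.

Definition run (c : rat -> rat -> rat) (obs : seq (rat * rat)) : state :=
  foldl (step c) init_state obs.

(* Besides the position bound and the sensor error bound, the invariant keeps
   the drift [w + v + 2 s - p] below 3/2.  The next position is
   [p' = drift + 2 (p - s) + delta], hence [|p'| < 3/2 + 1/2 + 1 = 3]; and the
   next drift is [(c(s', s) + 2 s' - s) + (s - p)], which the controller
   specification bounds by [5/4 + 1/4 = 3/2]. *)
From mathcomp Require Import all_boot all_order all_algebra.
From mathcomp Require Import ring lra.
Import Order.TTheory GRing.Theory Num.Theory.
Local Open Scope ring_scope.

Lemma foldl_invariant (S : Type) (T : eqType) (P : S -> Prop) (f : S -> T -> S) (Q : T -> Prop)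
    (x0 : S) (s : seq T) :
  (forall x t, Q t -> P x -> P (f x t)) ->
  (forall t, t \in s -> Q t) -> P x0 -> P (foldl f x0 s).
Proof.
move=> fP; elim: s x0 => [|t s IHs] x0 //= sQ Px0.
apply: IHs; first by move=> u su; apply: sQ; rewrite in_cons su orbT.
by apply: fP => //; apply: sQ; rewrite mem_head.
Qed.

Definition drift (st : state) : rat := st_w st + st_v st + 2%:R * st_s st - st_p st.

Definition safe_state (st : state) : Prop :=
  [/\ `|st_p st| <= 3%:R, `|st_s st - st_p st| <= 1 / 4%:R
    & `|drift st| < 3%:R / 2%:R].

Lemma safe_init_state : safe_state init_state.
Proof. by rewrite /safe_state /drift /= !(subrr, mulr0, addr0, normr0); split. Qed.

Section Step.

Variable c : rat -> rat -> rat.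
Variables (st : state) (o : rat * rat).

Let st' := step c st o.

Lemma step_position : st_p st' = drift st + 2%:R * (st_p st - st_s st) + o.1.
Proof. by rewrite /st' /drift /=; ring. Qed.

Lemma step_sensor_error : st_s st' - st_p st' = o.2.
Proof. by rewrite /st' /=; ring. Qed.

Lemma step_drift :
  drift st' = (c (st_s st') (st_s st) + 2%:R * st_s st' - st_s st) + (st_s st - st_p st).
Proof. by rewrite /st' /drift /=; ring. Qed.

End Step.

Lemma safe_state_step (c : rat -> rat -> rat)
  (hc : forall x y : rat, `|x| <= 13%:R / 4%:R -> `|y| <= 13%:R / 4%:R ->
          `|c x y + 2%:R * x - y| < 5%:R / 4%:R)
  (st : state) (o : rat * rat) :
  `|o.1| <= 1 /\ `|o.2| <= 1 / 4%:R -> safe_state st -> safe_state (step c st o).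
Proof.
move=> [/ler_normlP [d1 d2] /ler_normlP [e1 e2]].
move=> [/ler_normlP [p1 p2] /ler_normlP [q1 q2] /ltr_normlP [r1 r2]].
have /ler_normlP [p'1 p'2] : `|st_p (step c st o)| <= 3%:R.
  by rewrite step_position; apply/ler_normlP; split; lra.
have err' := step_sensor_error c st o.
have /ltr_normlP [k1 k2] :
    `|c (st_s (step c st o)) (st_s st) + 2%:R * st_s (step c st o) - st_s st| < 5%:R / 4%:R.
  by apply: hc; apply/ler_normlP; split; lra.
split.
- by apply/ler_normlP.
- by rewrite step_sensor_error; apply/ler_normlP.
- by rewrite step_drift; apply/ltr_normlP; split; lra.
Qed.

Theorem theorem1 (c : rat -> rat -> rat)
  (hc : forall x y : rat, `|x| <= 13%:R / 4%:R -> `|y| <= 13%:R / 4%:R ->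
          `|c x y + 2%:R * x - y| < 5%:R / 4%:R)
  (obs : seq (rat * rat))
  (hobs : forall o, o \in obs -> `|o.1| <= 1 /\ `|o.2| <= 1 / 4%:R) :
  `|st_p (run c obs)| <= 3%:R.
Proof.
suff [] : safe_state (run c obs) by [].
rewrite /run; apply: foldl_invariant hobs safe_init_state => st o; exact: safe_state_step.
Qed.
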